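(* Let $\mathbf{F}$ be a foliage tree and $X$ a topological space. (a) $\mathbf{F}$ grows into $X$ if and only if $\varnothing\notin\mathrm{Rise}_{\mathbf{F}}(X)$. (b) If $\mathbf{F}$ is a $\pi$-tree on $X$ and $p\in X$, then: (b1) the family $\{\mathrm{rise}_{\mathbf{F}}(p,U): U\text{ a neighbourhood of }p\text{ in }X\}$ has the finite intersection property; (b2) $\bigcap\{\mathrm{rise}_{\mathbf{F}}(p,U): U\text{ a neighbourhood of }p\text{ in }X\}=\varnothing$; (b3) $\mathrm{rise}_{\mathbf{F}}(p,U)$ is an infinite subset of $\omega$ for every neighbourhood $U$ of $p$ in $X$.
   Context: Neighbourhoods are not necessarily open. $\omega=\{0,1,2,\dots\}$, ${}^{<\omega}\omega$ is the set of finite sequences of natural numbers. A tree is a strict partial order in which the set of predecessors of every node is well-ordered; $\mathrm{height}(x)$ is the ordinal isomorphic to the set of predecessors of $x$; a branch is a maximal chain; $\mathrm{sons}(x)$ is the set of immediate successors of $x$; $0$ denotes the least node. A foliage tree is a pair $\mathbf{F}=(T,l)$ with $T$ a tree (skeleton) and $l$ a function on its nodes, $\mathbf{F}_x:=l(x)$; tree notions apply via the skeleton. $\mathrm{shoot}_{\mathbf{F}}(v)=\{\bigcup_{x\in C}\mathbf{F}_x: C\text{ a cofinite subset of }\mathrm{sons}_{\mathbf{F}}(v)\}$; $\mathrm{scope}_{\mathbf{F}}(p)=\{x:p\in\mathbf{F}_x\}$. For families $\gamma,\delta$ of sets, $\gamma\gg\delta$ means every nonempty $D\in\delta$ contains some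 nonempty $G\in\gamma$. $\mathrm{rise}_{\mathbf{F}}(p,U)=\{\mathrm{height}_{\mathbf{F}}(v): v\in\mathrm{scope}_{\mathbf{F}}(p)\text{ and }\mathrm{shoot}_{\mathbf{F}}(v)\gg\{U\}\}$; $\mathrm{Rise}_{\mathbf{F}}(X)=\{\mathrm{rise}_{\mathbf{F}}(p,U):p\in X,\ U\text{ a neighbourhood of }p\text{ in }X\}$. A family has the finite intersection property if every finite nonempty subfamily has nonempty intersection. $\mathbf{F}$ is locally strict if each non-maximal leaf $\mathbf{F}_x$ is the disjoint union of $\mathbf{F}_s$, $s\in\mathrm{sons}(x)$; has strict branches if it has a node and for each branch $B$, $\bigcap_{x\in B}\mathbf{F}_x$ is a singleton; is open in $X$ if all leaves are open in $X$; is a foliage $\omega,\omega$-tree if its skeleton is order-isomorphic to $({}^{<\omega}\omega,\subsetneq)$. A Baire foliage tree on $X$: open in $X$, locally strict foliage $\omega,\omega$-tree with strict branches and $\mathbf{F}_{0_{\mathbf{F}}}=X$. $\mathbf{F}$ grows into $X$ if for every $p\in X$ and neighbourhood $U$ of $p$ there is $z\in\mathrm{scope}_{\mathbf{F}}(p)$ with $\mathrm{shoot}_{\mathbf{F}}(z)\gg\{U\}$. A $\pi$-tree on $X$ is a Baire foliage tree on $X$ that grows into $X$. *)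

From HB Require Import structures.
From mathcomp Require Import all_boot.
From mathcomp Require Import all_classical topology.
Set Implicit Arguments.
Unset Strict Implicit.
Unset Printing Implicit Defensive.
Local Open Scope classical_set_scope.

Section Foliage.
Variable N : Type.
Variable lt : N -> N -> Prop.

Definition preds (x : N) : set N := [set y | lt y x].

Definition well_ordered_by (S : set N) : Prop :=
  (forall a b, S a -> S b -> a = b \/ lt a b \/ lt b a) /\
  (forall B, B `<=` S -> B !=set0 ->
     exists m, B m /\ forall b, B b -> b = m \/ lt m b).

Definition is_tree : Prop :=
  (forall x, ~ lt x x) /\
  (forall x y z, lt x y -> lt y z -> lt x z) /\
  (forall x, well_ordered_by (preds x)).

Definition order_iso (S S' : set N) : Prop :=
  exists f : N -> N, set_bij S S' f /\
    forall a b, S a -> S b -> (lt a b <-> lt (f a) (f b)).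

(* height(x): the order type of the predecessors of x, represented by its
   isomorphism class (of subsets of the skeleton).  Two nodes have the same
   height iff their predecessor sets are order-isomorphic. *)
Definition height (x : N) : set (set N) := [set S | order_iso S (preds x)].

(* an order type (represented as above) is a natural number, i.e. a finite
   ordinal, iff it is the order type of a finite set *)
Definition finite_ordinal (h : set (set N)) : Prop :=
  exists S, h S /\ finite_set S.

Definition sons (v : N) : set N :=
  [set w | lt v w /\ ~ (exists u, lt v u /\ lt u w)].

Definition is_least_node (r : N) : Prop := forall x, x = r \/ lt r x.

Definition chain (B : set N) : Prop :=
  forall a b, B a -> B b -> a = b \/ lt a b \/ lt b a.

Definition branch (B : set N) : Prop :=
  chain B /\ forall C, chain C -> B `<=` C -> C = B.

Definition strict_prefix (s t : seq nat) : Prop :=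
  exists u, t = s ++ u /\ u <> [::].

Definition omega_omega_skeleton : Prop :=
  exists f : N -> seq nat, bijective f /\
    forall x y, lt x y <-> strict_prefix (f x) (f y).

Variable A : Type.
Variable l : N -> set A.   (* the leaves: F_x = l x *)

Definition shoot (v : N) : set (set A) :=
  [set G | exists C, C `<=` sons v /\ finite_set (sons v `\` C) /\
                     G = \bigcup_(x in C) l x].

Definition scope (p : A) : set N := [set x | l x p].

Definition gg (gamma delta : set (set A)) : Prop :=
  forall D, delta D -> D !=set0 ->
    exists G, gamma G /\ G !=set0 /\ G `<=` D.

Definition rise (p : A) (U : set A) : set (set (set N)) :=
  height @` [set v | scope p v /\ gg (shoot v) [set U]].

Definition locally_strict : Prop :=
  forall x, (exists y, lt x y) ->
    l x = \bigcup_(s in sons x) l s /\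
    (forall s s', sons x s -> sons x s' -> s <> s' -> l s `&` l s' = set0).

Definition strict_branches : Prop :=
  (exists x : N, True) /\
  forall B, branch B -> exists q, \bigcap_(x in B) l x = [set q].

End Foliage.

(* The topological space X is represented as a subset X of a topological
   type T carrying the subspace topology (this is fully general). *)
Section InX.
Variable T : topologicalType.
Variable X : set T.

Definition nbhd_in (p : T) (U : set T) : Prop :=
  U `<=` X /\ exists V, nbhs p V /\ V `&` X `<=` U.

Definition open_in (O : set T) : Prop :=
  O `<=` X /\ forall p, O p -> nbhd_in p O.

Variable N : Type.
Variable lt : N -> N -> Prop.
Variable l : N -> set T.

Definition Rise : set (set (set (set N))) :=
  [set R | exists p U, X p /\ nbhd_in p U /\ R = rise lt l p U].

Definition grows_into : Prop :=
  forall p U, X p -> nbhd_in p U ->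
    exists z, scope l p z /\ gg (shoot lt l z) [set U].

Definition open_tree : Prop := forall x, open_in (l x).

Definition baire_tree : Prop :=
  open_tree /\ locally_strict lt l /\ omega_omega_skeleton lt /\
  strict_branches lt l /\ exists r, is_least_node lt r /\ l r = X.

Definition pi_tree : Prop := baire_tree /\ grows_into.
End InX.

Definition fip (B : Type) (Phi : set (set B)) : Prop :=
  forall S : set (set B), S `<=` Phi -> finite_set S -> S !=set0 ->
    (\bigcap_(Y in S) Y) !=set0.

From HB Require Import structures.
From mathcomp Require Import all_boot.
From mathcomp Require Import all_classical topology.
Set Implicit Arguments.
Unset Strict Implicit.
Unset Printing Implicit Defensive.
Local Open Scope classical_set_scope.
Local Open Scope card_scope.

(* Part (a) is a reformulation: the empty set belongs to Rise exactly when
   some rise(p, U) has no element.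

   For (b), transport the skeleton to finite sequences of naturals, where the
   height of a node is the length of its sequence.  Leaves shrink along the
   tree and sibling leaves are disjoint, so the scope of p is a chain; strict
   branches make every leaf nonempty.  Hence if shoot(z) >> {U} where p lies in
   U, U is included in F_y and y is in scope(p), then z is not strictly below
   y: every cofinite set of sons of z contains a son whose nonempty leaf
   misses F_y.  So height(z) >= height(y).  As p lies in leaves of every
   height, shrinking U to its intersection with F_y yields elements of
   rise(p, U) of arbitrary height (b3).  If h = height(w) is in rise(p, X),
   then taking for y a son of w in scope(p) shows that h is not in
   rise(p, F_y) (b2).  Finally rise(p, U) is nonempty and monotone in U,
   which gives (b1). *)

Lemma prefix_or_fork (A : eqType) (s t : seq A) :
  [\/ prefix s t, prefix t s |
      exists c a b u v, [/\ a != b, s = c ++ a :: u & t = c ++ b :: v]].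
Proof.
elim: s t => [|a s IH] [|b t]; rewrite ?prefix0s ?prefixs0; try by constructor.
have [<-|neq_ab] := eqVneq a b; last by apply: Or33; exists [::], a, b, s, t.
rewrite !prefix_cons eqxx.
have [|| [c [a' [b' [u [v [? -> ->]]]]]]] := IH t; try by constructor.
by apply: Or33; exists (a :: c), a', b', u, v.
Qed.

Lemma prefix_mkseq (A : eqType) (a : nat -> A) m n :
  m <= n -> prefix (mkseq a m) (mkseq a n).
Proof.
move=> le_mn; rewrite prefixE size_mkseq /mkseq -map_take take_iota.
by rewrite (minn_idPl le_mn).
Qed.

Lemma order_iso_refl (N : Type) (lt : N -> N -> Prop) (S : set N) :
  order_iso lt S S.
Proof. by exists id; split=> //; split=> // a Sa; exists a. Qed.

Lemma fip_directed (I B : Type) (P : set I) (F : I -> set B) :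
  P !=set0 ->
  (forall i j, P i -> P j -> exists2 k, P k & F k `<=` F i `&` F j) ->
  (forall i, P i -> F i !=set0) -> fip (F @` P).
Proof.
move=> [i0 Pi0] directed F_neq0 S sub_S /finite_seqP [s eq_S] _; subst S.
suff [k Pk Fk_sub] : exists2 k, P k & forall Y, Y \in s -> F k `<=` Y.
  by have [b Fkb] := F_neq0 k Pk; exists b => Y /Fk_sub; apply.
elim: s sub_S => [|Y s IH] sub_S; first by exists i0.
have [i Pi eq_Y] := sub_S Y (mem_head _ _).
have [j Pj Fj_sub] := IH (fun Z sZ => sub_S Z (predU1r Z Y sZ)).
have [k Pk Fk_sub] := directed i j Pi Pj.
exists k => // Z; rewrite in_cons => /predU1P [->|/Fj_sub FjZ] x /Fk_sub [Fix Fjx].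
  by rewrite -eq_Y.
exact: FjZ.
Qed.

Lemma infinite_set_unbounded (A : set nat) :
  (forall n, exists2 m, A m & n <= m) -> infinite_set A.
Proof.
move=> unbounded /finite_seqP [s eq_A].
have [m + lt_max_m] := unbounded (\max_(i <- s) i).+1.
rewrite eq_A /= => s_m.
by move: (leq_bigmax_seq (F := id) m s_m isT); rewrite leqNgt lt_max_m.
Qed.

Lemma gg_set1_subset (A : Type) (Gamma : set (set A)) U V :
  U `<=` V -> U !=set0 -> gg Gamma [set U] -> gg Gamma [set V].
Proof.
move=> UV U0 /(_ U erefl U0) [G [GammaG [G0 GU]]] _ -> _.
by exists G; split=> //; split=> //; apply: subset_trans GU UV.
Qed.

Lemma rise_subset (N A : Type) (lt : N -> N -> Prop) (l : N -> set A) p U V :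
  U `<=` V -> U !=set0 -> rise lt l p U `<=` rise lt l p V.
Proof.
move=> UV U0 _ [z [pz ggU] <-]; exists z => //.
by split=> //; apply: gg_set1_subset ggU.
Qed.

Lemma grows_intoE (T : topologicalType) (X : set T) (N : Type)
    (lt : N -> N -> Prop) (l : N -> set T) :
  grows_into X lt l <-> ~ Rise X lt l set0.
Proof.
split=> [grows [p [U [Xp [pU eq0]]]]|noRise p U Xp pU].
- have [z zpU] := grows p U Xp pU.
  have : rise lt l p U (height lt z) by exists z.
  by rewrite -eq0.
- apply: contrapT => nz; apply: noRise; exists p, U; split=> //; split=> //.
  by apply/seteqP; split=> // h [z zpU _]; apply: nz; exists z.
Qed.

Section NbhdIn.
Variables (T : topologicalType) (X : set T) (p : T).

Lemma nbhd_in_mem U : X p -> nbhd_in X p U -> U p.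
Proof. by move=> Xp [_ [V [pV VU]]]; apply: VU; split=> //; apply: nbhs_singleton. Qed.

Lemma open_in_nbhd O : open_in X O -> O p -> nbhd_in X p O.
Proof. by case=> _; apply. Qed.

Lemma nbhd_inT : nbhd_in X p X.
Proof. by split=> //; exists setT; split=> [|x []//]; apply: filterT. Qed.

Lemma nbhd_inI U V : nbhd_in X p U -> nbhd_in X p V -> nbhd_in X p (U `&` V).
Proof.
move=> [UX [U' [pU' U'U]]] [_ [V' [pV' V'V]]]; split; first by move=> x [/UX].
exists (U' `&` V'); split; first exact: filterI.
by move=> x [[U'x V'x] Xx]; split; [apply: U'U|apply: V'V].
Qed.

End NbhdIn.

Section OmegaOmegaSkeleton.
Variables (N : Type) (lt : N -> N -> Prop).
Variables (f : N -> seq nat) (g : seq nat -> N).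
Hypotheses (fK : cancel f g) (gK : cancel g f).
Hypothesis ltE : forall x y, lt x y <-> strict_prefix (f x) (f y).

Local Notation depth x := (size (f x)).

Definition child x a := g (rcons (f x) a).

Lemma f_child x a : f (child x a) = rcons (f x) a.
Proof. exact: gK. Qed.

Lemma child_inj x : injective (child x).
Proof. by move=> a b eq_ab; apply: (@rcons_injr _ (f x)); rewrite -!f_child eq_ab. Qed.

Lemma depth_lt x y : lt x y -> depth x < depth y.
Proof.
by move/ltE=> [[|a u] [-> //]]; rewrite size_cat addnS ltnS leq_addr.
Qed.

Lemma prefix_le x y : prefix (f x) (f y) -> x = y \/ lt x y.
Proof.
move/prefixP=> [[|a u] fy]; last by right; apply/ltE; exists (a :: u).
by left; rewrite -[x]fK -[y]fK fy cats0.
Qed.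

Lemma lt_child x a : lt x (child x a).
Proof. by apply/ltE; exists [:: a]; rewrite f_child cats1. Qed.

Lemma sonsP x y : sons lt x y <-> exists a, y = child x a.
Proof.
split=> [[lt_xy nomid]|[a ->]].
- move/ltE: lt_xy => [[|a [|b u]] [fy ne_u]]; first by [].
    by exists a; rewrite -[y]fK fy cats1.
  exfalso; apply: nomid; exists (child x a); split; first exact: lt_child.
  by apply/ltE; exists (b :: u); rewrite f_child fy cat_rcons.
- split=> [|[z [/depth_lt lt_xz /depth_lt]]]; first exact: lt_child.
  by rewrite f_child size_rcons ltnS leqNgt lt_xz.
Qed.

Lemma sons_infinite x : infinite_set (sons lt x).
Proof.
have inj : {in setT &, injective (child x)} by move=> a b _ _ /child_inj.
move=> fin_sons; apply: infinite_nat; rewrite -(eq_finite_set (inj_card_eq inj)).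
by apply: sub_finite_set fin_sons => _ [a _ <-]; apply/sonsP; exists a.
Qed.

Lemma set_bij_preds_depth x :
  set_bij (preds lt x) `I_(depth x) (fun u => depth u).
Proof.
split.
- by move=> u /depth_lt.
- move=> u v /set_mem /ltE [a [fx _]] /set_mem /ltE [b [fx' _]] eq_depth.
  have fu : f u = take (depth u) (f x) by rewrite fx take_size_cat.
  have fv : f v = take (depth v) (f x) by rewrite fx' take_size_cat.
  by rewrite -[u]fK -[v]fK fu fv eq_depth.
- move=> k /= lt_k; exists (g (take k (f x))); last by rewrite gK size_take lt_k.
  apply/ltE; rewrite gK; exists (drop k (f x)); split; first by rewrite cat_take_drop.
  by move/(congr1 size); rewrite size_drop /= => /eqP; rewrite subn_eq0 leqNgt lt_k.
Qed.

Lemma card_preds x : preds lt x #= `I_(depth x).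
Proof. by apply/card_set_bijP; exists (fun u => depth u); apply: set_bij_preds_depth. Qed.

Lemma height_depth v w : height lt v = height lt w -> depth v = depth w.
Proof.
move=> eq_h; have [h [bij_h _]] : height lt w (preds lt v).
  by rewrite -eq_h; apply: order_iso_refl.
apply/card_eq_II; rewrite -(card_eql (card_preds v)).
apply/card_set_bijP; exists ((fun u => depth u) \o h).
exact: set_bij_comp bij_h (set_bij_preds_depth w).
Qed.

Lemma height_finite_ordinal v : finite_ordinal (height lt v).
Proof.
exists (preds lt v); split; first exact: order_iso_refl.
by exists (depth v); apply: card_preds.
Qed.

Lemma path_branch (a : nat -> nat) : branch lt [set y | f y = mkseq a (depth y)].
Proof.
have chain_path : chain lt [set y | f y = mkseq a (depth y)].
  move=> y z fy fz; case/orP: (leq_total (depth y) (depth z)) => le_yz.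
  - have : prefix (f y) (f z) by rewrite fy fz; apply: prefix_mkseq.
    by case/prefix_le; auto.
  - have : prefix (f z) (f y) by rewrite fy fz; apply: prefix_mkseq.
    by case/prefix_le=> [->|]; auto.
split=> // C chainC sub_C; apply/seteqP; split=> // c Cc.
pose y := g (mkseq a (depth c)).
have depth_y : depth y = depth c by rewrite gK size_mkseq.
have path_y : f y = mkseq a (depth y) by rewrite depth_y gK.
have [->//|[/depth_lt|/depth_lt]] := chainC c y Cc (sub_C _ path_y);
  by rewrite depth_y ltnn.
Qed.

Section Foliage.
Variables (T : Type) (l : N -> set T).
Hypothesis LS : locally_strict lt l.

Lemma leaf_bigcup_sons x : l x = \bigcup_(s in sons lt x) l s.
Proof. by have [] := LS (ex_intro _ _ (lt_child x 0)). Qed.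

Lemma sons_leaf_disjoint x s s' :
  sons lt x s -> sons lt x s' -> s <> s' -> l s `&` l s' = set0.
Proof. by have [_] := LS (ex_intro _ _ (lt_child x 0)); apply. Qed.

Lemma leaf_child_sub x a : l (child x a) `<=` l x.
Proof. by rewrite [l x]leaf_bigcup_sons; apply: bigcup_sup; apply/sonsP; exists a. Qed.

Lemma leaf_prefix_sub x y : prefix (f x) (f y) -> l y `<=` l x.
Proof.
move/prefixP=> [u]; elim/last_ind: u y => [|u a IH] y fy.
  by rewrite -[y]fK fy cats0 fK.
have -> : y = child (g (f x ++ u)) a by rewrite /child gK rcons_cat -fy fK.
by apply: subset_trans (@leaf_child_sub _ a) _; apply: IH; rewrite gK.
Qed.

Lemma scope_comparable x y q : l x q -> l y q -> x = y \/ lt x y \/ lt y x.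
Proof.
move=> xq yq.
have [/prefix_le[]|/prefix_le[]|[c [a [b [u [v [neq_ab fx fy]]]]]]] :=
  prefix_or_fork (f x) (f y); [by left|by auto|by left|by auto|exfalso].
have neq_child : child (g c) a <> child (g c) b by move/child_inj/eqP; apply/negP.
have pre_x : prefix (f (child (g c) a)) (f x).
  by rewrite f_child gK fx -cat_rcons prefix_prefix.
have pre_y : prefix (f (child (g c) b)) (f y).
  by rewrite f_child gK fy -cat_rcons prefix_prefix.
have : (l (child (g c) a) `&` l (child (g c) b)) q.
  by split; [exact: leaf_prefix_sub pre_x _ xq|exact: leaf_prefix_sub pre_y _ yq].
by rewrite (sons_leaf_disjoint (x := g c) _ _ neq_child) //;
  apply/sonsP; [exists a|exists b].
Qed.

Lemma scope_child x q : l x q -> exists a, l (child x a) q.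
Proof. by rewrite leaf_bigcup_sons => -[_ /sonsP[a ->]]; exists a. Qed.

Lemma scope_deep x q n : l x q -> exists2 y, l y q & n <= depth y.
Proof.
move=> xq; elim: n => [|n [y yq le_ny]]; first by exists x.
by have [a ayq] := scope_child yq; exists (child y a); rewrite ?f_child ?size_rcons.
Qed.

Hypothesis SB : strict_branches lt l.

Lemma leaf_neq0 x : l x !=set0.
Proof.
have [_ /(_ _ (path_branch (nth 0 (f x)))) [q eq_q]] := SB.
exists q; have : (\bigcap_(y in [set y | f y = mkseq (nth 0 (f x)) (depth y)]) l y) q.
  by rewrite eq_q.
by apply; rewrite /= mkseq_nth.
Qed.

Lemma not_gg_shoot_below w y U :
  lt w y -> U !=set0 -> U `<=` l y -> ~ gg (shoot lt l w) [set U].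
Proof.
move=> lt_wy U0 Uy /(_ U erefl U0) [_ [[C [C_sons [cofin ->]]] [_ sub_U]]].
move/ltE: lt_wy => [[|a u] [fy ne_u]]; first by [].
have ya : l y `<=` l (child w a).
  by apply: leaf_prefix_sub; rewrite f_child fy -cat_rcons prefix_prefix.
have [x [Cx neq_x]] : exists x, C x /\ x <> child w a.
  apply: contrapT => noC; apply: (@sons_infinite w).
  apply: (@sub_finite_set _ _ ((sons lt w `\` C) `|` [set child w a])).
    move=> z wz; have [Cz|] := pselect (C z); [right|by left].
    by apply: contrapT => neq_z; apply: noC; exists z.
  by rewrite finite_setU; split; [|exact: finite_set1].
have [q xq] := leaf_neq0 x.
have : (l x `&` l (child w a)) q by split => //; apply/ya/Uy/sub_U; exists x.
by rewrite (sons_leaf_disjoint (C_sons _ Cx) _ neq_x) //; apply/sonsP; exists a.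
Qed.

Lemma gg_shoot_depth z y q U : l z q -> l y q -> U q -> U `<=` l y ->
  gg (shoot lt l z) [set U] -> depth y <= depth z.
Proof.
move=> zq yq Uq Uy gg_zU.
have [->//|[lt_zy|/depth_lt/ltnW//]] := scope_comparable zq yq.
by case: (not_gg_shoot_below lt_zy (ex_intro _ q Uq) Uy gg_zU).
Qed.

End Foliage.

Section PiTree.
Variables (T : topologicalType) (X : set T) (l : N -> set T).
Hypotheses (LS : locally_strict lt l) (SB : strict_branches lt l).
Hypotheses (open_l : open_tree X l) (grows : grows_into X lt l).
Variables (r : N) (p : T).
Hypotheses (leaf_r : l r = X) (Xp : X p).

Lemma rise_unbounded n U : nbhd_in X p U ->
  exists2 z, scope l p z /\ gg (shoot lt l z) [set U] & n <= depth z.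
Proof.
move=> pU; have rp : l r p by rewrite leaf_r.
have [y yp le_ny] := scope_deep LS n rp.
have pUy : nbhd_in X p (U `&` l y).
  by apply: nbhd_inI pU (open_in_nbhd (open_l y) yp).
have [z [zp gg_z]] := grows Xp pUy.
have Uyp : (U `&` l y) p := nbhd_in_mem Xp pUy.
exists z; first by split=> //; apply: gg_set1_subset gg_z; [apply: subIsetl|exists p].
exact: leq_trans le_ny (gg_shoot_depth LS SB zp yp Uyp (@subIsetr _ _ _) gg_z).
Qed.

Lemma rise_fip : fip [set rise lt l p U | U in nbhd_in X p].
Proof.
apply: fip_directed; first by exists X; apply: nbhd_inT.
- move=> U V pU pV; exists (U `&` V); first exact: nbhd_inI.
  have UV0 : U `&` V !=set0 by exists p; apply: nbhd_in_mem Xp (nbhd_inI pU pV).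
  move=> h h_UV; split; apply: rise_subset UV0 h h_UV; [exact: subIsetl|exact: subIsetr].
- by move=> U pU; have [z zU _] := rise_unbounded 0 pU; exists (height lt z); exists z.
Qed.

Lemma rise_bigcap_eq0 : \bigcap_(U in nbhd_in X p) rise lt l p U = set0.
Proof.
apply/seteqP; split=> // h rise_h.
have [w0 [w0p _] eq_h0] := rise_h X (nbhd_inT X p).
have [a ap] := scope_child LS w0p.
have [w [wp gg_w] eq_h] := rise_h _ (open_in_nbhd (open_l _) ap).
have := gg_shoot_depth LS SB wp ap ap (@subset_refl _ _) gg_w.
by rewrite f_child size_rcons (height_depth (etrans eq_h (esym eq_h0))) ltnn.
Qed.

Lemma rise_infinite U : nbhd_in X p U -> infinite_set (rise lt l p U).
Proof.
move=> pU fin_rise.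
pose level (h : set (set N)) :=
  xget 0 [set n | exists2 z, height lt z = h & depth z = n].
have level_height z : level (height lt z) = depth z.
  by apply: xget_unique; [exists z|move=> _ [z' /height_depth <- <-]].
apply: (@infinite_set_unbounded (level @` rise lt l p U)); last exact: finite_image.
move=> n; have [z zU le_nz] := rise_unbounded n pU.
by exists (depth z) => //; exists (height lt z); [exists z|exact: level_height].
Qed.

End PiTree.
End OmegaOmegaSkeleton.

Theorem lemma8 (T : topologicalType) (X : set T) (N : Type)
    (lt : N -> N -> Prop) (l : N -> set T) :
  is_tree lt ->
  (grows_into X lt l <-> ~ Rise X lt l set0) /\
  (pi_tree X lt l -> forall p, X p ->
     fip [set rise lt l p U | U in nbhd_in X p] /\
     \bigcap_(U in nbhd_in X p) rise lt l p U = set0 /\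
     (forall U, nbhd_in X p U ->
        infinite_set (rise lt l p U) /\
        rise lt l p U `<=` @finite_ordinal N)).
Proof.
(* The tree axioms follow from the omega,omega-skeleton. *)
move=> _; split; first exact: grows_intoE.
move=> [[open_l [LS [[f [[g fK gK] ltE]] [SB [r [_ leaf_r]]]]]] grows] p Xp.
split; first exact: (rise_fip fK gK ltE LS SB open_l grows leaf_r Xp).
split; first exact: (rise_bigcap_eq0 fK gK ltE LS SB open_l p).
move=> U pU; split.
  exact: (rise_infinite fK gK ltE LS SB open_l grows leaf_r Xp pU).
by move=> _ [z _ <-]; apply: (height_finite_ordinal fK gK ltE).
Qed.
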